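(* Let $(X,\|\cdot\|)$ be a normed linear space over $\mathbb{R}$ or $\mathbb{C}$, let $a\in X\setminus\{0\}$ and $x_1,\dots,x_n\in X\setminus\{0\}$ with $\|a\|\ge\|x_j-a\|$ for each $j\in\{1,\dots,n\}$. Then for any $p_1,\dots,p_n\ge0$ with $\sum_{j=1}^n p_j=1$, $$\frac{\big\|\sum_{j=1}^n p_jx_j\big\|}{\sum_{j=1}^n p_j\|x_j\|}\ \ge\ \frac12\min_{1\le j\le n}\left\{\frac{\|a\|^2-\|a-x_j\|^2}{\|x_j\|\,\|a\|}\right\}\ (\ge 0).$$ The constant $\tfrac12$ is best possible: if $X\neq\{0\}$, there is no constant $E>\tfrac12$ such that the inequality with $\tfrac12$ replaced by $E$ holds for all such $n$, $x_j$, $a$, $p_j$. *)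

From HB Require Import structures.
From mathcomp Require Import all_boot all_order all_algebra.
From mathcomp Require Import all_classical all_reals.
From mathcomp Require Import topology normedtype.
Set Implicit Arguments. Unset Strict Implicit. Unset Printing Implicit Defensive.
Import Order.TTheory GRing.Theory Num.Theory.
Local Open Scope ring_scope.

(* Minimum of a finite nonempty sequence of reals; the value on the empty
   sequence (0) is a dummy and is never used in the theorem, since there
   sum_j p_j = 1 forces n >= 1. *)
Definition seqmin (R : realDomainType) (s : seq R) : R :=
  match s with
  | [::] => 0
  | a :: s' => \big[Num.min/a]_(y <- s') y
  end.

Definition ordmin (R : realDomainType) (n : nat) (q : 'I_n -> R) : R :=
  seqmin [seq q j | j : 'I_n].

From HB Require Import structures.
From mathcomp Require Import all_boot all_order all_algebra.
From mathcomp Require Import all_classical all_reals.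
From mathcomp Require Import topology normedtype.
From mathcomp Require Import ring lra.
Set Implicit Arguments. Unset Strict Implicit. Unset Printing Implicit Defensive.
Import Order.TTheory GRing.Theory Num.Theory.
Import numFieldNormedType.Exports.
Local Open Scope ring_scope.

(* Write d_j := ||a|| - ||a - x_j|| >= 0.  Since ||a - x_j|| <= ||a||,
   ||a||^2 - ||a - x_j||^2 = d_j (||a|| + ||a - x_j||) <= 2 ||a|| d_j, so the
   j-th quotient q_j satisfies (q_j / 2) ||x_j|| <= d_j.  Averaging with the
   weights p_j and using the triangle inequality,
   (min q / 2) sum p_j ||x_j|| <= ||a|| - ||a - sum p_j x_j|| <= ||sum p_j x_j||.
   For sharpness take n = 1, a = v and x_1 = t v with 0 < t <= 1: the ratio on
   the left is 1 while q_1 = 2 - t, which tends to 2 as t -> 0. *)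

Lemma seqmin_le (R : realDomainType) (s : seq R) y : y \in s -> seqmin s <= y.
Proof.
case: s => // a s /=; rewrite inE => /predU1P[->|ys]; first exact: bigmin_le_id.
exact: ge_bigmin_seq.
Qed.

Lemma le_seqmin (R : realDomainType) (s : seq R) c :
  s != [::] -> (forall y, y \in s -> c <= y) -> c <= seqmin s.
Proof.
case: s => // a s _ /= cs; rewrite big_seq; apply: le_bigmin => [|y ys].
  by apply: cs; rewrite mem_head.
by apply: cs; rewrite inE ys orbT.
Qed.

Lemma ordmin_le (R : realDomainType) n (q : 'I_n -> R) j : ordmin q <= q j.
Proof. by apply: seqmin_le; apply: map_f; rewrite mem_enum. Qed.

Lemma le_ordmin (R : realDomainType) n (q : 'I_n -> R) c :
  (0 < n)%N -> (forall j, c <= q j) -> c <= ordmin q.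
Proof.
move=> n_gt0 cq; apply: le_seqmin => [|y /mapP[j _ ->] //].
by rewrite -size_eq0 size_map -cardE card_ord -lt0n.
Qed.

Lemma ordmin1 (R : realDomainType) (q : 'I_1 -> R) : ordmin q = q ord0.
Proof.
apply/le_anti/andP; split; first exact: ordmin_le.
by apply: le_ordmin => // j; rewrite (ord1 j).
Qed.

Lemma sum_eq1_gt0n (R : nzSemiRingType) n (p : 'I_n -> R) :
  \sum_(j < n) p j = 1 -> (0 < n)%N.
Proof. by case: n p => // p; rewrite big_ord0 => /eqP; rewrite eq_sym oner_eq0. Qed.

Lemma convex_comb_gt0 (R : numDomainType) n (p u : 'I_n -> R) :
  (forall j, 0 <= p j) -> \sum_(j < n) p j = 1 -> (forall j, 0 < u j) ->
  0 < \sum_(j < n) p j * u j.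
Proof.
move=> p_ge0 p_sum1 u_gt0.
rewrite lt_def sumr_ge0 ?andbT => [|j _]; last by rewrite mulr_ge0 // ltW.
apply/eqP => /psumr_eq0P sum0.
have p0 j : p j = 0.
  have /eqP := sum0 (fun i _ => mulr_ge0 (p_ge0 i) (ltW (u_gt0 i))) j isT.
  by rewrite mulf_eq0 (gt_eqF (u_gt0 j)) orbF => /eqP.
by move/eqP: p_sum1; rewrite big1 // eq_sym oner_eq0.
Qed.

Section NormedSpace.
Variables (R : realFieldType) (V : normedModType R).

Definition norm_gap_ratio (a x : V) : R :=
  (`|a| ^+ 2 - `|a - x| ^+ 2) / (`|x| * `|a|).

Lemma norm_gap_ratio_ge0 (a x : V) : `|x - a| <= `|a| -> 0 <= norm_gap_ratio a x.
Proof.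
move=> xa; rewrite divr_ge0 ?mulr_ge0 // subr_ge0.
by rewrite ler_pXn2r // ?nnegrE // distrC.
Qed.

Lemma half_norm_gap_ratio_le (a x : V) c :
  a != 0 -> x != 0 -> `|x - a| <= `|a| -> c <= norm_gap_ratio a x ->
  2^-1 * c * `|x| <= `|a| - `|a - x|.
Proof.
move=> a0 x0 xa; rewrite distrC in xa.
have a_gt0 : 0 < `|a| by rewrite normr_gt0.
have x_gt0 : 0 < `|x| by rewrite normr_gt0.
rewrite /norm_gap_ratio ler_pdivlMr ?mulr_gt0 // => c_le.
have sqr_gap : `|a| ^+ 2 - `|a - x| ^+ 2 <= 2 * `|a| * (`|a| - `|a - x|).
  by move: xa (normr_ge0 (a - x)); move: `|a - x| `|a| => u v; nra.
have : c * `|x| * `|a| <= 2 * (`|a| - `|a - x|) * `|a|.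
  by rewrite -mulrA (le_trans c_le) // mulrAC.
by rewrite ler_pM2r // => h; lra.
Qed.

Lemma norm_sub_convex_le n (a : V) (x : 'I_n -> V) (p : 'I_n -> R) :
  (forall j, 0 <= p j) -> \sum_(j < n) p j = 1 ->
  `|a| - \sum_(j < n) p j * `|a - x j| <= `|\sum_(j < n) p j *: x j|.
Proof.
move=> p_ge0 p_sum1; set S := \sum_(j < n) _ *: _.
have convex_sub : a - S = \sum_(j < n) p j *: (a - x j).
  rewrite -[a in a - _]scale1r -p_sum1 scaler_suml -sumrB.
  by apply: eq_bigr => j _; rewrite scalerBr.
have : `|a - S| <= \sum_(j < n) p j * `|a - x j|.
  rewrite convex_sub; apply: le_trans (ler_norm_sum _ _ _) _.
  by apply: ler_sum => j _; rewrite normrZ ger0_norm.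
by have := ler_normD (a - S) S; rewrite subrK; lra.
Qed.

Section ConvexCombination.
Variables (n : nat) (x : 'I_n -> V) (a : V) (p : 'I_n -> R).
Hypotheses (a0 : a != 0) (x0 : forall j, x j != 0).
Hypotheses (xa : forall j, `|x j - a| <= `|a|).
Hypotheses (p_ge0 : forall j, 0 <= p j) (p_sum1 : \sum_(j < n) p j = 1).

Lemma ordmin_norm_gap_ratio_ge0 : 0 <= ordmin (fun j => norm_gap_ratio a (x j)).
Proof.
apply: le_ordmin => [|j]; first exact: sum_eq1_gt0n p_sum1.
exact: norm_gap_ratio_ge0.
Qed.

Lemma half_ordmin_norm_gap_ratio_le :
  2^-1 * ordmin (fun j => norm_gap_ratio a (x j)) <=
  `|\sum_(j < n) p j *: x j| / (\sum_(j < n) p j * `|x j|).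
Proof.
set m := ordmin _.
have den_gt0 : 0 < \sum_(j < n) p j * `|x j|.
  by apply: convex_comb_gt0 => // j; rewrite normr_gt0.
rewrite ler_pdivlMr // mulr_sumr; apply: le_trans _ (norm_sub_convex_le a x p_ge0 p_sum1).
have avg_a : \sum_(j < n) p j * `|a| = `|a| by rewrite -mulr_suml p_sum1 mul1r.
rewrite -[`|a|]avg_a -sumrB; apply: ler_sum => j _.
rewrite -mulrBr mulrCA ler_wpM2l //.
exact: half_norm_gap_ratio_le (ordmin_le _ j).
Qed.

End ConvexCombination.

Definition norm_gap_ratio_bound (E : R) : Prop :=
  forall n (x : 'I_n -> V) (a : V) (p : 'I_n -> R),
    a != 0 -> (forall j, x j != 0) -> (forall j, `|x j - a| <= `|a|) ->
    (forall j, 0 <= p j) -> \sum_(j < n) p j = 1 ->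
    E * ordmin (fun j => norm_gap_ratio a (x j)) <=
    `|\sum_(j < n) p j *: x j| / (\sum_(j < n) p j * `|x j|).

Lemma norm_gap_ratio_scale (v : V) t :
  v != 0 -> 0 < t -> norm_gap_ratio v (t *: v) = 2 - t.
Proof.
move=> v0 t_gt0; have v_gt0 : 0 < `|v| by rewrite normr_gt0.
rewrite /norm_gap_ratio -{2}[v]scale1r -scalerBl !normrZ (gtr0_norm t_gt0).
rewrite exprMn real_normK ?num_real //.
by field; rewrite !gt_eqF.
Qed.

Lemma norm_gap_ratio_bound_le_half E :
  (exists v : V, v != 0) -> norm_gap_ratio_bound E -> E <= 2^-1.
Proof.
move=> [v v0] bound; rewrite leNgt; apply/negP => E_gt.
have E_gt0 : 0 < E by apply: lt_trans E_gt; rewrite invr_gt0.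
have v_gt0 : 0 < `|v| by rewrite normr_gt0.
(* with this t, E (2 - t) = E + 1/2 > 1 *)
pose t := 1 - (2 * E)^-1.
have t_gt0 : 0 < t by rewrite subr_gt0 invf_lt1 ?mulr_gt0 //; lra.
have t_le1 : t <= 1 by rewrite lerBlDr lerDl invr_ge0 mulr_ge0 // ltW.
have Et : E * t = E - 2^-1 by rewrite /t; field; rewrite gt_eqF.
have gt1 : 1 < E * 2 - (E - 2^-1) by lra.
have tv0 : t *: v != 0 by rewrite scaler_eq0 negb_or v0 andbT gt_eqF.
have := bound 1%N (fun=> t *: v) v (fun=> 1) v0.
rewrite ordmin1 norm_gap_ratio_scale // !big_ord1 scale1r mul1r.
rewrite divff ?normr_eq0 // mulrBr Et.
move=> ineq; move: gt1; rewrite ltNge ineq // ?big_ord1 // => _.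
rewrite -{2}[v]scale1r -scalerBl normrZ ler0_norm ?subr_le0 //.
by rewrite opprB ler_piMl ?subr_ge0 // lerBlDl lerDr ltW.
Qed.

End NormedSpace.

Theorem theorem2p2 (R : realType) (V : normedModType R) :
  (forall (n : nat) (x : 'I_n -> V) (a : V) (p : 'I_n -> R),
      a != 0 ->
      (forall j, x j != 0) ->
      (forall j, `|x j - a| <= `|a|) ->
      (forall j, 0 <= p j) ->
      \sum_(j < n) p j = 1 ->
      0 <= ordmin (fun j => (`|a| ^+ 2 - `|a - x j| ^+ 2) / (`|x j| * `|a|)) /\
      2^-1 * ordmin (fun j => (`|a| ^+ 2 - `|a - x j| ^+ 2) / (`|x j| * `|a|))
        <= `|\sum_(j < n) p j *: x j| / (\sum_(j < n) p j * `|x j|))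
  /\
  ((exists v : V, v != 0) ->
   forall E : R, 2^-1 < E ->
   ~ (forall (n : nat) (x : 'I_n -> V) (a : V) (p : 'I_n -> R),
        a != 0 ->
        (forall j, x j != 0) ->
        (forall j, `|x j - a| <= `|a|) ->
        (forall j, 0 <= p j) ->
        \sum_(j < n) p j = 1 ->
        E * ordmin (fun j => (`|a| ^+ 2 - `|a - x j| ^+ 2) / (`|x j| * `|a|))
          <= `|\sum_(j < n) p j *: x j| / (\sum_(j < n) p j * `|x j|))).
Proof.
split=> [n x a p a0 x0 xa p_ge0 p_sum1 | nontrivial E E_gt bound].
  split; first exact: ordmin_norm_gap_ratio_ge0 xa p_sum1.
  exact: half_ordmin_norm_gap_ratio_le a0 x0 xa p_ge0 p_sum1.
by move: E_gt; rewrite ltNge (norm_gap_ratio_bound_le_half nontrivial bound).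
Qed.
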